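(* Let $\Gamma$ be a countable group of almost simple type and let $\tau_N$ be its normal topology. Then $(\Gamma,\tau_N)$ is second countable, $\tau_N$ is finer than the profinite topology on $\Gamma$, and $\tau_N$ is Hausdorff if and only if $\bigcap_{N\in\mathcal{N}(\Gamma)} N=\langle e\rangle$.
   Context: A countable group $\Gamma$ is of almost simple type if it has no nontrivial finite normal subgroups and whenever $M,N\lhd\Gamma$ with $[M,N]=\langle e\rangle$, one of $M,N$ is trivial. Let $\mathcal{N}(\Gamma)=\{N\lhd\Gamma : N\ne\langle e\rangle\}$ be the collection of nontrivial normal subgroups. For $\Gamma$ of almost simple type this family is closed under finite intersections and conjugation invariant, and the normal topology $\tau_N$ on $\Gamma$ is the group topology having $\mathcal{N}(\Gamma)$ as a basis of open neighbourhoods of the identity. *)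

From Stdlib Require Import List.
Import ListNotations.
Set Implicit Arguments.

(** A group: carrier with an associative multiplication, left identity and
    left inverses (this axiomatisation is equivalent to the usual one). *)
Record group := Group {
  carrier :> Type;
  gmul : carrier -> carrier -> carrier;
  gone : carrier;
  ginv : carrier -> carrier;
  gmulA : forall x y z, gmul x (gmul y z) = gmul (gmul x y) z;
  gmul1g : forall x, gmul gone x = x;
  gmulVg : forall x, gmul (ginv x) x = gone }.

Section GroupNotions.
Variable G : group.
Local Notation "x * y" := (gmul G x y).
Local Notation e := (gone G).
Local Notation "x ^-1" := (ginv G x) (at level 2, format "x ^-1").

(** Countable: enumerated by the naturals (the carrier is nonempty). *)
Definition countable_group : Prop := exists f : nat -> G, forall g : G, exists n, f n = g.

Definition subgroup (H : G -> Prop) : Prop :=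
  H e /\ (forall x y, H x -> H y -> H (x * y)) /\ (forall x, H x -> H (x^-1)).

Definition normal (H : G -> Prop) : Prop :=
  subgroup H /\ (forall g h, H h -> H (g^-1 * h * g)).

Definition trivial_set (H : G -> Prop) : Prop := forall x, H x <-> x = e.

Definition finite_set (H : G -> Prop) : Prop := exists l : list G, forall x, H x -> In x l.

Definition generated (S : G -> Prop) : G -> Prop :=
  fun x => forall K, subgroup K -> (forall y, S y -> K y) -> K x.

Definition commutator (x y : G) : G := x^-1 * y^-1 * x * y.

Definition comm_subgroup (M N : G -> Prop) : G -> Prop :=
  generated (fun z => exists m n, M m /\ N n /\ z = commutator m n).

Definition almost_simple_type : Prop :=
  (forall N, normal N -> finite_set N -> trivial_set N) /\
  (forall M N, normal M -> normal N -> trivial_set (comm_subgroup M N) ->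
     trivial_set M \/ trivial_set N).

Definition nontriv_normal (N : G -> Prop) : Prop := normal N /\ ~ trivial_set N.

(** Normal topology tau_N: the group topology with N(Gamma) as a base of
    neighbourhoods of e; U is open iff every x in U has some x N inside U. *)
Definition open_N (U : G -> Prop) : Prop :=
  forall x, U x -> exists N, nontriv_normal N /\ (forall n, N n -> U (x * n)).

Definition finite_index (N : G -> Prop) : Prop :=
  exists l : list G, forall g, exists h, In h l /\ N (h^-1 * g).

(** Profinite topology: base of neighbourhoods of e = finite-index normal subgroups. *)
Definition open_prof (U : G -> Prop) : Prop :=
  forall x, U x -> exists N, normal N /\ finite_index N /\ (forall n, N n -> U (x * n)).

Definition second_countable_N : Prop :=
  exists B : nat -> G -> Prop,
    (forall k, open_N (B k)) /\
    (forall U, open_N U -> forall x, U x -> exists k, B k x /\ forall y, B k y -> U y).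

Definition hausdorff_N : Prop :=
  forall x y : G, x <> y -> exists U V, open_N U /\ open_N V /\ U x /\ V y /\
     (forall z, ~ (U z /\ V z)).

Definition N_finer_than_prof : Prop := forall U, open_prof U -> open_N U.

Definition inter_nontriv_normal : G -> Prop :=
  fun x => forall N, nontriv_normal N -> N x.

End GroupNotions.

(* A nontrivial normal subgroup contains some g <> e and hence the normal
   closure of g, so the countably many cosets x * ncl g (x, g ranging over an
   enumeration of the group) form a base of tau_N.  A normal subgroup of finite
   index is nontrivial, since otherwise the whole (nontrivial) group would be a
   finite normal subgroup.  Finally tau_N separates points exactly when some
   nontrivial normal subgroup misses any given x^-1 y <> e, i.e. when the
   intersection of all of them is trivial. *)
From Stdlib Require Import Classical Cantor.
Set Implicit Arguments.

Section NormalTopology.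
Variable G : group.
Local Notation "x * y" := (gmul G x y).
Local Notation e := (gone G).
Local Notation "x ^-1" := (ginv G x) (at level 2, format "x ^-1").

Lemma mulKg (x y : G) : x^-1 * (x * y) = y.
Proof. rewrite gmulA, gmulVg. apply gmul1g. Qed.

Lemma idempotent_one (y : G) : y * y = y -> y = e.
Proof. intro Hy. rewrite <- (gmulVg G y). rewrite <- Hy at 3. symmetry. apply mulKg. Qed.

Lemma mulgV (x : G) : x * x^-1 = e.
Proof.
  apply idempotent_one.
  rewrite <- gmulA, (gmulA G (x^-1) x), gmulVg, gmul1g. reflexivity.
Qed.

Lemma mulg1 (x : G) : x * e = x.
Proof. rewrite <- (gmulVg G x), gmulA, mulgV. apply gmul1g. Qed.

Lemma mulKVg (x y : G) : x * (x^-1 * y) = y.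
Proof. rewrite gmulA, mulgV. apply gmul1g. Qed.

Lemma mulgI (a b c : G) : a * b = a * c -> b = c.
Proof. intro H. rewrite <- (mulKg a b), <- (mulKg a c), H. reflexivity. Qed.

Lemma invMg (a b : G) : (a * b)^-1 = b^-1 * a^-1.
Proof.
  apply (mulgI (a * b)). rewrite mulgV.
  rewrite <- gmulA, (gmulA G b), mulgV, gmul1g, mulgV. reflexivity.
Qed.

Lemma invgK (a : G) : (a^-1)^-1 = a.
Proof. apply (mulgI (a^-1)). rewrite mulgV, gmulVg. reflexivity. Qed.

Definition lcoset (x : G) (N : G -> Prop) : G -> Prop := fun y => N (x^-1 * y).

Definition ncl (g : G) : G -> Prop := fun y => forall N, normal G N -> N g -> N y.

Lemma ncl_normal (g : G) : normal G (ncl g).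
Proof.
  unfold ncl; split; [split; [| split] |].
  - intros N [[N1 _] _] _. exact N1.
  - intros x y Hx Hy N HN Ng. apply (proj1 (proj2 (proj1 HN))); [apply Hx | apply Hy]; assumption.
  - intros x Hx N HN Ng. apply (proj2 (proj2 (proj1 HN))), Hx; assumption.
  - intros h y Hy N HN Ng. apply (proj2 HN), Hy; assumption.
Qed.

Lemma ncl_nontriv_normal (g : G) : g <> e -> nontriv_normal G (ncl g).
Proof.
  intros Hg. split; [apply ncl_normal |].
  intros T. apply Hg, (proj1 (T g)). intros N _ Ng. exact Ng.
Qed.

Lemma nontriv_normal_witness (N : G -> Prop) :
  nontriv_normal G N -> exists n, N n /\ n <> e.
Proof.
  intros [[[N1 _] _] HNt]. apply NNPP. intro C. apply HNt. intro x. split.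
  - intro Nx. apply NNPP. intro Hx. apply C. eauto.
  - intros ->. exact N1.
Qed.

Lemma lcoset_refl (x : G) (N : G -> Prop) : subgroup G N -> lcoset x N x.
Proof. intros [N1 _]. unfold lcoset. rewrite gmulVg. exact N1. Qed.

Lemma open_N_lcoset (x : G) (N : G -> Prop) :
  nontriv_normal G N -> open_N G (lcoset x N).
Proof.
  intros HN y Hy. exists N. split; [exact HN |].
  intros n Nn. unfold lcoset. rewrite gmulA.
  destruct HN as [[[_ [NM _]] _] _]. auto.
Qed.

Lemma open_N_lcoset_sub (U : G -> Prop) (x : G) : open_N G U -> U x ->
  exists N, nontriv_normal G N /\ forall y, lcoset x N y -> U y.
Proof.
  intros HU Ux. destruct (HU x Ux) as [N [HN HNU]]. exists N. split; [exact HN |].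
  intros y Hy. rewrite <- (mulKVg x y). apply HNU, Hy.
Qed.

(* x^-1 y = (x^-1 z) (y^-1 z)^-1 for any common point z of the two cosets. *)
Lemma lcoset_disjoint (N : G -> Prop) (x y z : G) : subgroup G N ->
  ~ N (x^-1 * y) -> ~ (lcoset x N z /\ lcoset y N z).
Proof.
  intros [_ [NM NV]] Nxy [Hx Hy]. apply Nxy.
  replace (x^-1 * y) with ((x^-1 * z) * (y^-1 * z)^-1).
  - apply NM; auto.
  - rewrite invMg, invgK, <- gmulA, mulKVg. reflexivity.
Qed.

Lemma countable_second_countable_N : countable_group G -> second_countable_N G.
Proof.
  intros [f Hf].
  exists (fun k y => let (a, b) := Cantor.of_nat k in
                f b <> e /\ lcoset (f a) (ncl (f b)) y).
  split.
  - intros k y Hy. destruct (Cantor.of_nat k) as [a b]. destruct Hy as [Hb Hy].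
    destruct (open_N_lcoset (f a) (ncl_nontriv_normal Hb) y Hy) as [N [HN HNU]].
    exists N. split; [exact HN |]. intros n Nn. split; auto.
  - intros U HU x Ux.
    destruct (@open_N_lcoset_sub U x HU Ux) as [N [HN HNU]].
    destruct (nontriv_normal_witness HN) as [n [Nn Hn]].
    destruct (Hf x) as [a <-]. destruct (Hf n) as [b <-].
    exists (Cantor.to_nat (a, b)). rewrite Cantor.cancel_of_to.
    split.
    + split; [exact Hn | apply lcoset_refl, ncl_normal].
    + intros y [_ Hy]. apply HNU. exact (Hy N (proj1 HN) Nn).
Qed.

Lemma finite_index_trivial_finite (N : G -> Prop) :
  finite_index G N -> trivial_set G N -> finite_set G (fun _ => True).
Proof.
  intros [l Hl] T. exists l. intros y _. destruct (Hl y) as [h [Hin Hh]].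
  apply T in Hh. rewrite <- (mulKVg h y), Hh, mulg1. exact Hin.
Qed.

Lemma normal_full : normal G (fun _ => True).
Proof. repeat split. Qed.

Lemma finite_index_nontrivial (N : G -> Prop) :
  (forall M, normal G M -> finite_set G M -> trivial_set G M) ->
  (exists g : G, g <> e) -> finite_index G N -> ~ trivial_set G N.
Proof.
  intros Hfin [g Hg] Hidx T. apply Hg.
  apply (Hfin _ normal_full (finite_index_trivial_finite Hidx T) g). exact I.
Qed.

Lemma N_finer_than_prof_of_nontrivial :
  (forall M, normal G M -> finite_set G M -> trivial_set G M) ->
  (exists g : G, g <> e) -> N_finer_than_prof G.
Proof.
  intros Hfin Hnt U HU x Ux. destruct (HU x Ux) as [N [HN [Hidx HNU]]].
  exists N. split; [split; [exact HN | exact (finite_index_nontrivial Hfin Hnt Hidx)] |].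
  exact HNU.
Qed.

Lemma hausdorff_N_inter_trivial : hausdorff_N G -> trivial_set G (inter_nontriv_normal G).
Proof.
  intros Hh x. split.
  - intro Hx. apply NNPP. intro Hne.
    destruct (Hh x e Hne) as [U [V [_ [OV [Ux [Ve D]]]]]].
    destruct (OV _ Ve) as [N [HN HNV]].
    apply (D x). split; [exact Ux |].
    rewrite <- (gmul1g G x). apply HNV, Hx, HN.
  - intros -> N [[[N1 _] _] _]. exact N1.
Qed.

Lemma inter_trivial_hausdorff_N : trivial_set G (inter_nontriv_normal G) -> hausdorff_N G.
Proof.
  intros Ht x y Hxy.
  assert (Hout : exists N, nontriv_normal G N /\ ~ N (x^-1 * y)).
  { apply NNPP. intro C. apply Hxy, (mulgI (x^-1)). rewrite gmulVg. symmetry.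
    apply (proj1 (Ht _)). intros N HN. apply NNPP. intro Nxy. apply C. eauto. }
  destruct Hout as [N [HN Nxy]].
  assert (SN : subgroup G N) by exact (proj1 (proj1 HN)).
  exists (lcoset x N), (lcoset y N).
  split; [apply open_N_lcoset, HN |].
  split; [apply open_N_lcoset, HN |].
  split; [apply lcoset_refl, SN |].
  split; [apply lcoset_refl, SN |].
  intro z. exact (@lcoset_disjoint N x y z SN Nxy).
Qed.

End NormalTopology.

Theorem mainTheorem5 (G : group) :
  countable_group G -> almost_simple_type G ->
  (exists g : G, g <> gone G) ->
  second_countable_N G /\ N_finer_than_prof G /\
  (hausdorff_N G <-> @trivial_set G (inter_nontriv_normal G)).
Proof.
  intros Hcount [Hfin _] Hnt.
  split; [| split].
  - exact (countable_second_countable_N Hcount).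
  - exact (N_finer_than_prof_of_nontrivial Hfin Hnt).
  - split; [apply hausdorff_N_inter_trivial | apply inter_trivial_hausdorff_N].
Qed.
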